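(* For all $f_1,\dots,f_n:\mathscr{P}\to\mathbb{Q}$: (i) $\langle f_1\odot f_2\odot\cdots\odot f_n\rangle_q=\langle f_1\rangle_q\langle f_2\rangle_q\cdots\langle f_n\rangle_q$; (ii) $\langle f_1|\cdots|f_n\rangle_q=\langle f_1\otimes\cdots\otimes f_n\rangle_q$.
   Context: $\mathscr{P}$ is the set of partitions, $|\lambda|=\sum\lambda_i$. $\langle f\rangle_q=\frac{\sum_\lambda f(\lambda)q^{|\lambda|}}{\sum_\lambda q^{|\lambda|}}$. Induced product: with $u_\lambda=\prod_{i:\lambda_i>0}u_{\lambda_i}$ and $\langle f\rangle_{\vec u}=\frac{\sum_\lambda f(\lambda)u_\lambda}{\sum_\lambda u_\lambda}\in\mathbb{Q}[[u_1,u_2,\dots]]$ (a linear bijection in $f$), $f\odot g$ is defined by $\langle f\odot g\rangle_{\vec u}=\langle f\rangle_{\vec u}\langle g\rangle_{\vec u}$. $\Pi(n)$ is the set of set partitions of $\{1,\dots,n\}$, $\ell(\alpha)$ the number of blocks, $\mu(\alpha,\mathbf{1})=(-1)^{\ell(\alpha)-1}(\ell(\alpha)-1)!$, and $f_A=\prod_{a\in A}f_a$ (pointwise product). The connected product is $f_1|\cdots|f_n=\sum_{\alpha\in\Pi(n)}\mu(\alpha,\mathbf{1})\bigodot_{A\in\alpha}f_A$, and the connected $q$-bracket is $\langle f_1\otimes\cdots\otimes f_n\rangle_q=\sum_{\alpha\in\Pi(n)}\mu(\alpha,\mathbf{1})\prod_{A\in\alpha}\langle f_A\rangle_q$. *)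

From HB Require Import structures.
From mathcomp Require Import all_boot all_order all_algebra.
Set Implicit Arguments. Unset Strict Implicit. Unset Printing Implicit Defensive.
Import Order.TTheory GRing.Theory Num.Theory.
Local Open Scope ring_scope.

Definition is_intpart (s : seq nat) : bool :=
  sorted (fun x y => (y <= x)%N) s && all (fun x => (0 < x)%N) s.

Record intpart := IntPart { ipval :> seq nat; _ : is_intpart ipval }.
HB.instance Definition _ := [isSub for ipval].
HB.instance Definition _ := [Countable of intpart by <:].

Definition psize (l : intpart) : nat := sumn l.

Definition seqs_upto (N : nat) : seq (seq nat) :=
  flatten [seq [seq map (@nat_of_ord N.+1) (tval t) | t <- enum {: k.-tuple 'I_N.+1}]
          | k <- iota 0 N.+1].

(** The list of all partitions of N (each exactly once). *)
Definition intparts_of (N : nat) : seq intpart :=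
  pmap insub [seq s <- seqs_upto N | sumn s == N].

(** * Formal power series in q over Q: coefficient sequences. *)
Definition qseries := nat -> rat.
Definition qone : qseries := fun N => (N == 0%N)%:R.
Definition qadd (A B : qseries) : qseries := fun N => A N + B N.
Definition qmul (A B : qseries) : qseries :=
  fun N => \sum_(i < N.+1) A i * B (N - i)%N.
(** Inverse of a series D with D 0 = 1, via the geometric series in E = 1 - D
    (E^k has no terms of degree < k). *)
Definition qinv (D : qseries) : qseries :=
  fun N => \sum_(k < N.+1) iter k (qmul (fun M => qone M - D M)) qone N.

Definition qgen (f : intpart -> rat) : qseries :=
  fun N => \sum_(l <- intparts_of N) f l.
Definition qbracket (f : intpart -> rat) : qseries :=
  qmul (qgen f) (qinv (qgen (fun _ => 1))).

(** * Formal power series in u_1, u_2, ...: a monomial u_lambda is indexed by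
    the partition lambda (the multiset of its variable indices), so a series is
    a function intpart -> rat (its coefficient family). *)
Definition useries := intpart -> rat.
Definition uone : useries := fun l => (size (ipval l) == 0%N)%:R.
(** Product: (AB)_lambda = sum over mu (+) nu = lambda (multiset union). *)
Definition umul (A B : useries) : useries := fun l =>
  \sum_(k < (psize l).+1) \sum_(m <- intparts_of k)
    \sum_(n <- intparts_of (psize l - k)%N)
      (if perm_eq (ipval m ++ ipval n) (ipval l) then A m * B n else 0).
(** Inverse of D with constant term 1: sum_k (1 - D)^k, which at u_lambda
    only involves k <= length of lambda. *)
Definition uinv (D : useries) : useries := fun l =>
  \sum_(k < (size (ipval l)).+1) iter k (umul (fun m => uone m - D m)) uone l.

Definition uZ : useries := fun _ => 1.
Definition ubracket (f : intpart -> rat) : useries := umul f (uinv uZ).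

(** Induced product: f (.) g is the preimage of <f>_u <g>_u under the bijection
    f |-> <f>_u, whose inverse is A |-> A * (sum_lambda u_lambda). *)
Definition odot (f g : intpart -> rat) : intpart -> rat :=
  umul (umul (ubracket f) (ubracket g)) uZ.
(** Unit of the induced product (the constant function 1, <1>_u = 1). *)
Definition odot_unit : intpart -> rat := fun _ => 1.

Definition fblock n (f : 'I_n -> intpart -> rat) (A : {set 'I_n}) : intpart -> rat :=
  fun l => \prod_(a in A) f a l.

(** mu(alpha, 1) = (-1)^(l(alpha)-1) (l(alpha)-1)! *)
Definition mobius_top n (P : {set {set 'I_n}}) : rat :=
  (-1) ^+ (#|P|.-1) * ((#|P|.-1)`!)%:R.

(** Set partitions of {1..n} are the P with [partition P [set: 'I_n]]. *)
Definition connected_prod n (f : 'I_n -> intpart -> rat) : intpart -> rat :=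
  fun l => \sum_(P : {set {set 'I_n}} | partition P [set: 'I_n])
             mobius_top P * (\big[odot/odot_unit]_(A in P) fblock f A) l.

Definition connected_qbracket n (f : 'I_n -> intpart -> rat) : qseries :=
  fun N => \sum_(P : {set {set 'I_n}} | partition P [set: 'I_n])
             mobius_top P * (\big[qmul/qone]_(A in P) qbracket (fblock f A)) N.

From mathcomp Require Import all_boot all_order all_algebra.
From mathcomp Require Import zify.
From Stdlib Require Import FunctionalExtensionality.
Set Implicit Arguments. Unset Strict Implicit. Unset Printing Implicit Defensive.
Import GRing.Theory.
Local Open Scope ring_scope.

(* Specializing u_k to q^k turns a u-series into a q-series (the map qgen).
   This specialization is multiplicative, since a partition of N splits as
   the multiset union of partitions of k and N - k, and hence also sends the
   geometric-series inverse of a u-series to that of its image.  Consequently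
   qgen <f>_u = <f>_q, and the defining identity <f (.) g>_u = <f>_u <g>_u of
   the induced product becomes <f (.) g>_q = <f>_q <g>_q, which iterates to
   (i).  Part (ii) follows from (i) because <.>_q is linear. *)

Section TakePoly.
Variable R : nzRingType.
Implicit Types p q : {poly R}.

Lemma take_polyMl m p q : take_poly m (take_poly m p * q) = take_poly m (p * q).
Proof.
apply/polyP => i; rewrite !coef_take_poly; case: ltnP => // lt_im.
rewrite !coefM; apply: eq_bigr => -[j /=]; rewrite ltnS => le_ji _.
by rewrite coef_take_poly (leq_ltn_trans le_ji lt_im).
Qed.

Lemma take_polyMr m p q : take_poly m (p * take_poly m q) = take_poly m (p * q).
Proof.
apply/polyP => i; rewrite !coef_take_poly; case: ltnP => // lt_im.
rewrite !coefM; apply: eq_bigr => -[j /=] _ _.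
by rewrite coef_take_poly (leq_ltn_trans (leq_subr j i) lt_im).
Qed.

Lemma coef_expr_lt p k i : p`_0 = 0 -> (i < k)%N -> (p ^+ k)`_i = 0.
Proof.
move=> p0; elim: k i => [//|k IHk] i lt_ik.
rewrite exprS coefM big1 // => -[[|j] /= le_ji] _; first by rewrite p0 mul0r.
by rewrite IHk ?mulr0 //; lia.
Qed.

End TakePoly.

(* Identities between q-series are checked on their truncations at every
   degree N, where qmul becomes a product of polynomials modulo X^(N+1). *)
Definition qtrunc (A : qseries) (N : nat) : {poly rat} := \poly_(i < N.+1) A i.

Lemma coef_qtrunc A N i : (qtrunc A N)`_i = if (i <= N)%N then A i else 0.
Proof. exact: coef_poly. Qed.

Lemma coef_qtrunc_le A N i : (i <= N)%N -> (qtrunc A N)`_i = A i.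
Proof. by rewrite coef_qtrunc => ->. Qed.

Lemma qtrunc_inj A B : (forall N, qtrunc A N = qtrunc B N) -> A = B.
Proof.
move=> eqAB; apply: functional_extensionality => N.
by have := congr1 (fun p : {poly rat} => p`_N) (eqAB N); rewrite !coef_qtrunc leqnn.
Qed.

Lemma take_qtrunc A N : take_poly N.+1 (qtrunc A N) = qtrunc A N.
Proof. exact/take_poly_id/size_poly. Qed.

Lemma qtrunc1 N : qtrunc qone N = 1.
Proof.
by apply/polyP => i; rewrite coef_qtrunc coef1 /qone; case: i => [|i]; rewrite ?if_same.
Qed.

Lemma qtruncB A B N :
  qtrunc (fun M => A M - B M) N = qtrunc A N - qtrunc B N.
Proof. by apply/polyP => i; rewrite coefB !coef_qtrunc; case: ifP; rewrite ?subr0. Qed.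

Lemma qtruncM A B N :
  qtrunc (qmul A B) N = take_poly N.+1 (qtrunc A N * qtrunc B N).
Proof.
apply/polyP => i; rewrite coef_qtrunc coef_take_poly ltnS.
case: leqP => // le_iN; rewrite coefM; apply: eq_bigr => -[j /=]; rewrite ltnS => le_ji _.
by rewrite !coef_qtrunc (leq_trans le_ji le_iN) (leq_trans (leq_subr j i) le_iN).
Qed.

Lemma qmulA : associative qmul.
Proof.
move=> A B C; apply: qtrunc_inj => N.
by rewrite !qtruncM take_polyMr take_polyMl mulrA.
Qed.

Lemma qmulq1 : right_id qone qmul.
Proof. by move=> A; apply: qtrunc_inj => N; rewrite qtruncM qtrunc1 mulr1 take_qtrunc. Qed.

Lemma qtrunc_iter_qmul E k N :
  qtrunc (iter k (qmul E) qone) N = take_poly N.+1 (qtrunc E N ^+ k).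
Proof.
elim: k => [|k IHk]; first by rewrite qtrunc1 take_poly_id // size_poly1.
by rewrite iterS qtruncM IHk take_polyMr exprS.
Qed.

Lemma qtrunc_qinv D N : D 0%N = 1 ->
  qtrunc (qinv D) N
  = take_poly N.+1 (\sum_(k < N.+1) (1 - qtrunc D N) ^+ k).
Proof.
move=> D0; set e := 1 - qtrunc D N.
have e0 : e`_0 = 0 by rewrite coefB coef1 coef_qtrunc D0 subrr.
(* e has no constant term, so (e ^+ k)`_i = 0 for k > i: the sum over k <= i
   defining qinv D at degree i extends to k <= N. *)
apply/polyP => i; rewrite coef_qtrunc coef_take_poly ltnS coef_sum.
case: leqP => // le_iN; rewrite /qinv.
rewrite (big_ord_widen N.+1 (fun k => iter k _ qone i)) // big_mkcond /=.
apply: eq_bigr => -[k /= _] _; case: ltnP => [_ | lt_ik].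
  rewrite -(@coef_qtrunc_le (iter k _ qone) _ _ le_iN) qtrunc_iter_qmul.
  by rewrite qtruncB qtrunc1 coef_take_poly ltnS le_iN.
by rewrite coef_expr_lt.
Qed.

Lemma qmulqV D : D 0%N = 1 -> qmul D (qinv D) = qone.
Proof.
move=> D0; apply: qtrunc_inj => N; rewrite qtruncM qtrunc_qinv // take_polyMr.
set e := 1 - qtrunc D N.
have e0 : e`_0 = 0 by rewrite coefB coef1 coef_qtrunc D0 subrr.
have -> : qtrunc D N = 1 - e by rewrite opprB addrC subrK.
rewrite -opprB mulNr -subrX1 opprB qtrunc1.
apply/polyP => i; rewrite coef_take_poly coefB coef1; case: ltnP => [lt_iN | le_Ni].
  by rewrite coef_expr_lt // subr0.
by case: i le_Ni.
Qed.

Lemma intpart_sorted (l : intpart) : sorted geq l.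
Proof. by case: l => s /= /andP[]. Qed.

Lemma intpart_gt0 (l : intpart) : all (fun x => 0 < x)%N l.
Proof. by case: l => s /= /andP[]. Qed.

Lemma leq_size_psize (l : intpart) : (size l <= psize l)%N.
Proof.
rewrite /psize; elim: (ipval l) (intpart_gt0 l) => //= x s IHs /andP[x_gt0 /IHs].
lia.
Qed.

Definition intpart_nil := @IntPart [::] isT.

Lemma size_intpart_eq0 (l : intpart) : (size l == 0%N) = (l == intpart_nil).
Proof. by apply/idP/eqP => [/nilP eq_l0 | ->] //; apply: val_inj. Qed.

Lemma psize_eq0 (l : intpart) : (psize l == 0%N) = (l == intpart_nil).
Proof.
apply/idP/eqP => [|-> //]; rewrite -leqn0 => /(leq_trans (leq_size_psize l)).
by rewrite leqn0 size_intpart_eq0 => /eqP.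
Qed.

Lemma mem_seqs_upto N (s : seq nat) :
  all (fun x => x <= N)%N s -> (size s <= N)%N -> s \in seqs_upto N.
Proof.
move=> le_sN size_sN; apply/flatten_mapP; exists (size s); first by rewrite mem_iota.
apply/mapP; exists (map_tuple (fun x => inord x : 'I_N.+1) (in_tuple s)).
  by rewrite mem_enum.
rewrite /= -map_comp map_id_in // => x s_x /=.
by rewrite inordK // ltnS (allP le_sN).
Qed.

Lemma flatten_map_uniq (T S : eqType) (F : T -> seq S) (tag : S -> T) s :
  uniq s -> (forall x, uniq (F x)) -> (forall x y, y \in F x -> tag y = x) ->
  uniq (flatten (map F s)).
Proof.
move=> uniq_s uniq_F tagF; elim: s uniq_s => //= x s IHs /andP[s'x uniq_s].
rewrite cat_uniq uniq_F IHs // andbT; apply/hasPn => y /flatten_mapP[x' s_x' F_y].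
by apply: contra s'x => /tagF <-; rewrite (tagF _ _ F_y).
Qed.

Lemma uniq_seqs_upto N : uniq (seqs_upto N).
Proof.
apply: (@flatten_map_uniq _ _ _ size); first exact: iota_uniq.
  by move=> k; rewrite map_inj_uniq ?enum_uniq // => t1 t2 /(inj_map val_inj)/val_inj.
by move=> k _ /mapP[t _ ->]; rewrite size_map size_tuple.
Qed.

Lemma mem_intparts_of N (l : intpart) : (l \in intparts_of N) = (psize l == N).
Proof.
rewrite mem_pmap_sub mem_filter; case: eqP => //= <-; apply: mem_seqs_upto.
  by apply/allP => x /perm_to_rem/perm_sumn ->; exact: leq_addr.
exact: leq_size_psize.
Qed.

Lemma uniq_intparts_of N : uniq (intparts_of N).
Proof. exact/pmap_sub_uniq/filter_uniq/uniq_seqs_upto. Qed.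

Lemma sum_intparts_of_eq N (l0 : intpart) :
  \sum_(l <- intparts_of N) ((l == l0)%:R : rat) = (psize l0 == N)%:R.
Proof.
rewrite -natr_sum -(big_mkcond (fun l => l == l0) (fun _ => 1%N)) /= sum1_count.
by rewrite count_uniq_mem ?uniq_intparts_of // mem_intparts_of.
Qed.

Lemma geq_total : total geq. Proof. by move=> x y; exact: leq_total. Qed.

Lemma geq_trans : transitive geq.
Proof. by move=> y x z le_yx le_zy; exact: leq_trans le_zy le_yx. Qed.

Lemma ipunion_subproof (m n : intpart) : is_intpart (sort geq (m ++ n)).
Proof.
rewrite /is_intpart (sort_sorted geq_total) (perm_all _ (permEl (perm_sort _ _))).
by rewrite all_cat !intpart_gt0.
Qed.

Definition ipunion (m n : intpart) : intpart := IntPart (ipunion_subproof m n).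

Lemma perm_ipunion (m n l : intpart) : perm_eq (m ++ n) l = (l == ipunion m n).
Proof.
apply/idP/eqP => [perm_mn_l | ->]; last by rewrite perm_sym perm_sort.
apply: val_inj; apply: (sorted_eq geq_trans) => /=.
- by move=> x y /andP[le_yx le_xy]; apply/eqP; rewrite eqn_leq; apply/andP.
- exact: intpart_sorted.
- exact: sort_sorted geq_total _.
- by rewrite perm_sym perm_sort.
Qed.

Lemma psize_ipunion m n : psize (ipunion m n) = (psize m + psize n)%N.
Proof. by rewrite /psize /= (perm_sumn (permEl (perm_sort _ _))) sumn_cat. Qed.

Lemma qgenM A B : qgen (umul A B) = qmul (qgen A) (qgen B).
Proof.
apply: functional_extensionality => N; rewrite /qgen /qmul /umul.
under eq_big_seq => l /[!mem_intparts_of] /eqP psize_l do rewrite psize_l.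
rewrite exchange_big; apply: eq_bigr => -[k /=]; rewrite ltnS => le_kN _.
rewrite big_distrl exchange_big /= !big_seq; apply: eq_bigr => m.
rewrite mem_intparts_of => /eqP psize_m.
rewrite big_distrr exchange_big /= !big_seq; apply: eq_bigr => n.
rewrite mem_intparts_of => /eqP psize_n.
under eq_bigr => l _ do rewrite perm_ipunion -mulrb -mulr_natl.
rewrite -big_distrl /= sum_intparts_of_eq psize_ipunion psize_m psize_n subnKC //.
by rewrite eqxx !mul1r.
Qed.

Lemma qgen1 : qgen uone = qone.
Proof.
apply: functional_extensionality => N; rewrite /qgen /uone.
under eq_bigr do rewrite size_intpart_eq0.
by rewrite sum_intparts_of_eq eq_sym.
Qed.

Lemma qgenB A B : qgen (fun l => A l - B l) = (fun N => qgen A N - qgen B N).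
Proof. by apply: functional_extensionality => N; rewrite /qgen sumrB. Qed.

Lemma iter_umul_eq0 D k (l : intpart) : D intpart_nil = 1 ->
  (size l < k)%N -> iter k (umul (fun m => uone m - D m)) uone l = 0.
Proof.
move=> D_nil; elim: k l => [//|k IHk] l lt_lk; rewrite iterS /umul.
apply: big1 => i _; apply: big1 => m _; apply: big1 => n _.
case: ifP => // /perm_size; rewrite size_cat => size_l.
have [/eqP | m_gt0] := posnP (size m).
  by rewrite size_intpart_eq0 => /eqP ->; rewrite D_nil subrr mul0r.
rewrite IHk ?mulr0 // -ltnS (leq_trans _ lt_lk) // ltnS -size_l -add1n leq_add2r.
exact: m_gt0.
Qed.

Lemma qgen_uinv D : D intpart_nil = 1 -> qgen (uinv D) = qinv (qgen D).
Proof.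
move=> D_nil; set E := fun m => uone m - D m.
have qgen_iter k :
    qgen (iter k (umul E) uone) = iter k (qmul (fun M => qone M - qgen D M)) qone.
  elim: k => [|k IHk]; first exact: qgen1.
  by rewrite !iterS qgenM IHk qgenB qgen1.
apply: functional_extensionality => N; rewrite /qinv.
under eq_bigr do rewrite -qgen_iter.
rewrite /qgen exchange_big /=; apply: eq_big_seq => l.
rewrite mem_intparts_of => /eqP psize_l.
have le_lN : (size l <= N)%N by rewrite -psize_l leq_size_psize.
rewrite /uinv (big_ord_widen N.+1 (fun k => iter k (umul E) uone l)) // big_mkcond /=.
by apply: eq_bigr => -[k /= _] _; case: ltnP => // /iter_umul_eq0->.
Qed.

Lemma qgen_uZ0 : qgen uZ 0 = 1.
Proof.
rewrite /qgen (eq_big_seq (fun l => (l == intpart_nil)%:R)).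
  by rewrite sum_intparts_of_eq.
by move=> l; rewrite mem_intparts_of psize_eq0 => ->.
Qed.

Lemma qgen_ubracket f : qgen (ubracket f) = qbracket f.
Proof. by rewrite qgenM qgen_uinv. Qed.

Lemma qbracket_odot f g : qbracket (odot f g) = qmul (qbracket f) (qbracket g).
Proof.
by rewrite {1}/qbracket qgenM -qmulA qmulqV ?qgen_uZ0 // qmulq1 qgenM !qgen_ubracket.
Qed.

Lemma qbracket_odot_unit : qbracket odot_unit = qone.
Proof. exact: qmulqV qgen_uZ0. Qed.

Lemma qbracket_bigodot I (r : seq I) (P : pred I) (F : I -> intpart -> rat) :
  qbracket (\big[odot/odot_unit]_(i <- r | P i) F i)
  = \big[qmul/qone]_(i <- r | P i) qbracket (F i).
Proof.
elim: r => [|i r IHr]; first by rewrite !big_nil qbracket_odot_unit.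
by rewrite !big_cons; case: (P i); rewrite ?qbracket_odot IHr.
Qed.

Lemma qbracket_sum (I : finType) (P : pred I) (c : I -> rat) (F : I -> intpart -> rat) :
  qbracket (fun l => \sum_(i | P i) c i * F i l)
  = (fun N => \sum_(i | P i) c i * qbracket (F i) N).
Proof.
apply: functional_extensionality => N; rewrite /qbracket /qmul /qgen.
under eq_bigr do rewrite exchange_big /= big_distrl /=.
rewrite exchange_big /=; apply: eq_bigr => i _.
by rewrite mulr_sumr; apply: eq_bigr => k _; rewrite -mulr_sumr mulrA.
Qed.

Theorem proposition3p2p5 (n : nat) (f : 'I_n -> intpart -> rat) :
  qbracket (\big[odot/odot_unit]_(i < n) f i)
    = \big[qmul/qone]_(i < n) qbracket (f i)
  /\ ((0 < n)%N -> qbracket (connected_prod f) = connected_qbracket f).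
Proof.
split=> [|_]; first exact: qbracket_bigodot.
rewrite /connected_prod qbracket_sum /connected_qbracket.
by apply: functional_extensionality => N; apply: eq_bigr => P _; rewrite qbracket_bigodot.
Qed.
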